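(* Let $T$ be a nonabelian finite simple group and let $A,B$ be proper subgroups of $T$ with $T=AB$. Let $M=T^2$, $G=T\wr S_2=M\rtimes S_2$ (with $S_2$ swapping coordinates), $K_1=A\times B$ and $K_2=B\times A$. Then $K_1\cap K_2=(A\cap B)\times(A\cap B)$ is normalised by $S_2$; $G$ acts transitively on the coset space $\Omega$ of $H=(K_1\cap K_2)\rtimes S_2$, with $M$ a transitive minimal normal subgroup; and for $\omega=H$: (a) $\{K_1,K_2\}$ is a Cartesian system of subgroups in $M$ with respect to $\omega$ which is not $M$-normal and has $|\mathcal F_i|=2$; (b) $\{(A\cap B)\times T,\ T\times(A\cap B)\}$ is also a Cartesian system of subgroups in $M$ with respect to $\omega$, and it is $M$-normal.
   Context: For $G$ innately transitive on $\Omega$ (i.e. with a transitive minimal normal subgroup, a plinth) with plinth $M$ and $\omega\in\Omega$, a Cartesian system of subgroups in $M$ with respect to $\omega$ is a $G_\omega$-conjugation-invariant set $\{K_1,\ldots,K_\ell\}$ of subgroups of $M$ with $\bigcap_i K_i=M_\omega$ and $K_i\bigl(\bigcap_{j\ne i}K_j\bigr)=M$ for all $i$. It is $M$-normal if there are normal subgroups $M_1,\ldots,M_\ell$ of $M$ with $M=M_1\times\cdots\times M_\ell$ and $K_i=(M_i\cap M_\omega)\times\prod_{j\ne i}M_j$ for all $i$. For $M=T_1\times\cdots\times T_k$ with simple factors $T_i$ and projections $\sigma_i:M\to T_i$, $\mathcal F_i=\{\sigma_i(K_j):\sigma_i(K_j)\ne T_i\}$. *)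

From HB Require Import structures.
From mathcomp Require Import all_boot all_fingroup all_solvable.
Set Implicit Arguments. Unset Strict Implicit. Unset Printing Implicit Defensive.
Import GroupScope.
Local Open Scope group_scope.

(* The wreath product  T wr S_2 = (T x T) ><| S_2  as a concrete       *)
(* finGroupType.  An element ((a,b), e) stands for (a,b) * s^e where  *)
(* s is the generator of S_2 swapping the two coordinates.             *)
Section Wreath2.
Variable gT : finGroupType.

Definition wswap (e : bool) (x : gT * gT) : gT * gT :=
  if e then (x.2, x.1) else x.

Definition wr2_mul (u v : (gT * gT) * bool) : (gT * gT) * bool :=
  (u.1 * wswap u.2 v.1, addb u.2 v.2).
Definition wr2_inv (u : (gT * gT) * bool) : (gT * gT) * bool :=
  (wswap u.2 (u.1)^-1, u.2).
Definition wr2_one : (gT * gT) * bool := (1, false).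

Lemma wswapM e x y : wswap e (x * y) = wswap e x * wswap e y.
Proof. by case: e. Qed.
Lemma wswapV e x : wswap e x^-1 = (wswap e x)^-1.
Proof. by case: e. Qed.
Lemma wswapD e f x : wswap (addb e f) x = wswap e (wswap f x).
Proof. by case: e; case: f; case: x. Qed.

Lemma wr2_mul1g : left_id wr2_one wr2_mul.
Proof. by case=> x e; rewrite /wr2_mul /= mul1g. Qed.

Lemma wr2_mulVg : left_inverse wr2_one wr2_inv wr2_mul.
Proof.
by case=> x e; rewrite /wr2_mul /= -wswapM mulVg addbb; case: e.
Qed.

Lemma wr2_mulgA : associative wr2_mul.
Proof.
case=> x e [y f] [z g]; rewrite /wr2_mul /= addbA wswapM wswapD mulgA //.
Qed.

Definition wr2 : predArgType := ((gT * gT) * bool)%type.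
HB.instance Definition _ := Finite.on wr2.
HB.instance Definition _ := Finite_isGroup.Build wr2
  wr2_mulgA wr2_mul1g wr2_mulVg.

Definition inM (a b : gT) : wr2 := ((a, b), false).
Definition wr2_s : wr2 := ((1, 1), true).
Definition prodM (X Y : {set gT}) : {set wr2} := [set inM a b | a in X, b in Y].
Definition sigma1 (u : wr2) : gT := u.1.1.
Definition sigma2 (u : wr2) : gT := u.1.2.
End Wreath2.

(* M is the plinth, w the chosen point; G_w = 'C_G[w | to] and         *)
(* M_w = 'C_M[w | to].  Ks is the set {K_1, ..., K_l}.                 *)
Section Cartesian.
Variables (aT : finGroupType) (D : {group aT}) (Omega : finType).
Variable to : action D Omega.

Definition cartesian_system (G M : {set aT}) (w : Omega)
    (Ks : {set {set aT}}) : Prop :=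
  [/\ forall K, K \in Ks -> group_set K /\ K \subset M,
      forall g K, g \in 'C_G[w | to] -> K \in Ks -> K :^ g \in Ks,
      M :&: \bigcap_(K in Ks) K = 'C_M[w | to]
    & forall K, K \in Ks -> K * (M :&: \bigcap_(J in Ks | J != K) J) = M].

(* subgroup M_i attached to K_i is Mi K_i.                               *)
Definition M_normal (M : {set aT}) (w : Omega) (Ks : {set {set aT}}) : Prop :=
  exists Mi : {set aT} -> {group aT},
    [/\ forall K, K \in Ks -> Mi K <| M,
        \big[dprod/1]_(K in Ks) Mi K = M
      & forall K, K \in Ks ->
          K = (Mi K :&: 'C_M[w | to]) \x \big[dprod/1]_(J in Ks | J != K) Mi J].
End Cartesian.

Definition calF1 (gT : finGroupType) (Ks : {set {set wr2 gT}}) : {set {set gT}} :=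
  [set (@sigma1 gT) @: K | K : {set wr2 gT} in Ks & (@sigma1 gT) @: K != [set: gT]].
Definition calF2 (gT : finGroupType) (Ks : {set {set wr2 gT}}) : {set {set gT}} :=
  [set (@sigma2 gT) @: K | K : {set wr2 gT} in Ks & (@sigma2 gT) @: K != [set: gT]].

(* Put C := A :&: B.  The stabiliser of the trivial coset is H = C wr S_2, so G_w = H
   permutes {A x B, B x A} and M_w = C x C = (A x B) :&: (B x A), while the factorisations
   T = AB = BA give (A x B)(B x A) = M: both pairs in the statement are Cartesian systems.
   If M = M_1 x M_2 witnessed M-normality of {A x B, B x A}, then M_2 <= A x B and
   M_1 <= B x A.  Since T is simple with trivial centre, a subgroup of T x T normalised by
   T x T with a nontrivial coordinate contains the whole corresponding factor; hence a
   normal subgroup of M inside a product of proper subgroups is trivial, forcing M = 1.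
   For {C x T, T x C} the decomposition M = (T x 1)(1 x T) does the job. *)
From HB Require Import structures.
From mathcomp Require Import all_boot all_fingroup all_solvable.
Import GroupScope.
Local Open Scope group_scope.
Set Implicit Arguments. Unset Strict Implicit.

Section BigSet2.
Variables (R : Type) (idx : R) (op : Monoid.com_law idx) (I : finType).
Variables (a b : I) (F : I -> R).
Hypothesis neq_ab : a != b.

Lemma big_set2 : \big[op/idx]_(i in [set a; b]) F i = op (F a) (F b).
Proof. by rewrite big_setU1 ?big_set1 // inE. Qed.

Lemma big_set2_neql : \big[op/idx]_(i in [set a; b] | i != a) F i = F b.
Proof.
rewrite -(big_set1 op b F); apply: eq_bigl => i; rewrite !inE.
by case: eqP => [->|_]; rewrite ?(negbTE neq_ab) ?andbF ?andbT.
Qed.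

Lemma big_set2_neqr : \big[op/idx]_(i in [set a; b] | i != b) F i = F a.
Proof.
rewrite -(big_set1 op a F); apply: eq_bigl => i; rewrite !inE.
case: (eqVneq i b) => [->|_]; last by rewrite orbF andbT.
by rewrite andbF eq_sym (negbTE neq_ab).
Qed.

End BigSet2.

Lemma rcosets_mulgl (gT : finGroupType) (H M : {group gT}) :
  rcosets H (H * M) = rcosets H M.
Proof.
apply/setP => X; apply/rcosetsP/rcosetsP => [[_ /mulsgP[h m Hh Mm ->] ->]|[m Mm ->]].
  by exists m; rewrite // rcosetM rcoset_id.
by exists m; rewrite // -[m]mul1g mem_mulg.
Qed.

Lemma simple_nonabelian_commg (gT : finGroupType) (a : gT) :
  simple [set: gT] -> ~~ abelian [set: gT] -> a != 1 -> exists t, [~ a, t] != 1.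
Proof.
move=> simT nabT nta; apply/existsP; apply: contraR nta.
rewrite negb_exists => /forallP central_a.
have Za : a \in 'Z([set: gT]).
  by apply/centerP; split=> // t _; apply/commgP/negPn/central_a.
case/simpleP: simT => _ /(_ _ (center_normal [set: gT])) [Z1|ZT].
  by move: Za; rewrite Z1 inE.
by case/negP: nabT; apply/center_idP.
Qed.

Section Wreath2.
Variable gT : finGroupType.
Implicit Types (a b c d t : gT) (C X Y : {group gT}) (u : wr2 gT).

Local Notation T := [set: gT].
Local Notation M := (prodM [set: gT] [set: gT]).
Local Notation s := (wr2_s gT).

Lemma wr2_mulE a b e c d f :
  (((a, b), e) : wr2 gT) * ((c, d), f) =
  ((a * (if e then d else c), b * (if e then c else d)), addb e f).
Proof. by case: e. Qed.

Lemma wr2_invE a b e : (((a, b), e) : wr2 gT)^-1 =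
  (((if e then b^-1 else a^-1), (if e then a^-1 else b^-1)), e).
Proof. by case: e. Qed.

Lemma inMM a b c d : inM a b * inM c d = inM (a * c) (b * d).
Proof. by []. Qed.

Lemma inMJ a b c d : inM a b ^ inM c d = inM (a ^ c) (b ^ d).
Proof. by []. Qed.

Lemma inMR a b c d : [~ inM a b, inM c d] = inM [~ a, c] [~ b, d].
Proof. by []. Qed.

Lemma wr2_sV : s^-1 = s.
Proof. by rewrite /wr2_s wr2_invE invg1. Qed.

Lemma inM_swapJ a b : inM a b ^ s = inM b a.
Proof. by rewrite /conjg wr2_sV /inM /wr2_s !wr2_mulE /= !mulg1 !mul1g. Qed.

Lemma wr2_baseS2 u : u = inM (@sigma1 gT u) (@sigma2 gT u) * s ^+ u.2.
Proof. by case: u => [[a b] []]; rewrite /= ?expg1 ?expg0 wr2_mulE /= !mulg1. Qed.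

Lemma mem_prodM (X Y : {set gT}) a b e :
  (((a, b), e) : wr2 gT) \in prodM X Y = [&& ~~ e, a \in X & b \in Y].
Proof.
apply/imset2P/and3P => [[x y Xx Yy [-> -> ->]] //|[/negbTE -> Xa Yb]].
by exists a b.
Qed.

Lemma prodM_group_set X Y : group_set (prodM X Y).
Proof.
apply/group_setP; split; first by rewrite mem_prodM !group1.
case=> [[a b] e] [[c d] f]; rewrite !mem_prodM.
by case/and3P=> /negbTE-> Xa Yb /and3P[/negbTE-> Xc Yd]; rewrite /= !groupM.
Qed.
Canonical prodM_group X Y := Group (prodM_group_set X Y).

Lemma mem_prodMT u : (u \in M) = ~~ u.2.
Proof. by case: u => [[a b] e]; rewrite mem_prodM !in_setT !andbT. Qed.

Lemma prodM_subT (X Y : {set gT}) : prodM X Y \subset M.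
Proof. by apply/subsetP => [[[a b] e]]; rewrite mem_prodM mem_prodMT => /and3P[]. Qed.

Lemma setI_prodM (X Y Z W : {set gT}) :
  prodM X Y :&: prodM Z W = prodM (X :&: Z) (Y :&: W).
Proof.
apply/setP => [[[a b] e]]; rewrite inE !mem_prodM !inE.
by case: e; case: (a \in X); case: (a \in Z); case: (b \in Y); case: (b \in W).
Qed.

Lemma mul_prodM (X Y Z W : {set gT}) :
  prodM X Y * prodM Z W = prodM (X * Z) (Y * W).
Proof.
apply/setP => [[[a b] e]]; apply/mulsgP/idP => [[[[x y] f] [[z w] g]]|].
  rewrite !mem_prodM => /and3P[/negbTE-> Xx Yy] /and3P[/negbTE-> Zz Ww].
  by rewrite wr2_mulE => -[-> -> ->]; rewrite /= !mem_mulg.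
rewrite mem_prodM => /and3P[/negbTE-> /mulsgP[x z Xx Zz ->] /mulsgP[y w Yy Ww ->]].
by exists (inM x y) (inM z w); rewrite ?mem_prodM ?Xx ?Yy ?Zz ?Ww.
Qed.

Lemma prodMJ (X Y : {set gT}) c d :
  prodM X Y :^ inM c d = prodM (X :^ c) (Y :^ d).
Proof.
apply/setP => [[[a b] e]]; rewrite mem_conjg /conjg invgK !wr2_mulE !mem_prodM.
by case: e => //=; rewrite !mem_conjg !conjgE !invgK !mulgA.
Qed.

Lemma prodM_swapJ (X Y : {set gT}) : prodM X Y :^ s = prodM Y X.
Proof.
apply/setP => [[[a b] e]]; rewrite mem_conjg wr2_sV /conjg wr2_sV !wr2_mulE.
by rewrite !mem_prodM /=; case: e => //=; rewrite !mulg1 !mul1g andbC.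
Qed.

Lemma sigma1_prodM (X : {set gT}) Y : @sigma1 gT @: prodM X Y = X.
Proof.
apply/setP => a; apply/imsetP/idP => [[[[x y] e]]|Xa].
  by rewrite mem_prodM => /and3P[_ Xx _] ->.
by exists (inM a 1); rewrite ?mem_prodM ?group1 ?Xa.
Qed.

Lemma sigma2_prodM X (Y : {set gT}) : @sigma2 gT @: prodM X Y = Y.
Proof.
apply/setP => b; apply/imsetP/idP => [[[[x y] e]]|Yb].
  by rewrite mem_prodM => /and3P[_ _ Yy] ->.
by exists (inM 1 b); rewrite ?mem_prodM ?group1 ?Yb.
Qed.

Lemma prodM_inj X Y (Z W : {group gT}) : prodM X Y = prodM Z W -> X :=: Z /\ Y :=: W.
Proof.
move=> eXYZW; split; first by rewrite -(sigma1_prodM X Y) eXYZW sigma1_prodM.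
by rewrite -(sigma2_prodM X Y) eXYZW sigma2_prodM.
Qed.

Lemma prodMT_normal : M <| [set: wr2 gT].
Proof.
rewrite /normal subsetT; apply/subsetP => g _.
rewrite inE [g]wr2_baseS2 conjsgM prodMJ !conjTg.
by case: g.2; rewrite ?expg1 ?expg0 ?prodM_swapJ ?conjsg1.
Qed.

Definition subwr2 (C : {set gT}) : {set wr2 gT} :=
  [set u | (@sigma1 gT u \in C) && (@sigma2 gT u \in C)].

Lemma subwr2_group_set C : group_set (subwr2 C).
Proof.
apply/group_setP; split; first by rewrite inE /= !group1.
case=> [[a b] e] [[c d] f]; rewrite !inE /sigma1 /sigma2 /= => /andP[Ca Cb] /andP[Cc Cd].
by case: e; rewrite /= !groupM.
Qed.
Canonical subwr2_group C := Group (subwr2_group_set C).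

Lemma prodM_mul_cycle_swap C : prodM C C * <[s]> = subwr2 C.
Proof.
apply/eqP; rewrite eqEsubset mul_subG ?cycle_subG ?inE /= ?group1 //.
  apply/subsetP => u; rewrite inE => /andP[Cu1 Cu2].
  by rewrite [u]wr2_baseS2 mem_mulg ?mem_cycle ?mem_prodM ?Cu1 ?Cu2.
by apply/subsetP => [[[a b] e]]; rewrite mem_prodM inE => /and3P[_ Ca Cb]; rewrite /= Ca.
Qed.

Lemma prodM_conj_subwr2 C X Y g : C \subset X -> C \subset Y -> g \in subwr2 C ->
  prodM X Y :^ g \in [set prodM X Y; prodM Y X].
Proof.
move=> sCX sCY; rewrite inE => /andP[Cg1 Cg2].
have XYg : inM (@sigma1 gT g) (@sigma2 gT g) \in prodM X Y.
  by rewrite mem_prodM (subsetP sCX) ?(subsetP sCY).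
rewrite [g]wr2_baseS2 conjsgM (conjGid XYg).
by case: g.2; rewrite ?expg1 ?expg0 ?prodM_swapJ ?conjsg1 !inE eqxx ?orbT.
Qed.

Lemma prodMT_astab1_subwr2 C : 'C_M[subwr2 C | 'Rs] = prodM C C.
Proof.
rewrite (astab1Rs (subwr2_group C)); apply/setP => [[[a b] e]].
by rewrite inE !mem_prodM !in_setT inE /=; case: e.
Qed.

Lemma mul_subwr2_prodMT C : subwr2 C * M = [set: wr2 gT].
Proof.
apply/eqP; rewrite eqEsubset subsetT /= normC; last first.
  exact: subset_trans (subsetT _) (normal_norm prodMT_normal).
apply/subsetP => u _; rewrite [u]wr2_baseS2; apply: mem_mulg; first by rewrite mem_prodMT.
by rewrite -prodM_mul_cycle_swap -[_ ^+ _]mul1g mem_mulg ?mem_cycle ?mem_prodM ?group1.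
Qed.

Lemma cartesian_system_prodM C X Y :
  X :&: Y = C -> X * Y = T -> Y * X = T -> prodM X Y != prodM Y X ->
  cartesian_system 'Rs [set: wr2 gT] M (subwr2 C) [set prodM X Y; prodM Y X].
Proof.
move=> eXY mXY mYX neqK.
have sCX : C \subset X by rewrite -eXY subsetIl.
have sCY : C \subset Y by rewrite -eXY subsetIr.
split.
- by move=> K /set2P[]->; (split; [exact: groupP (prodM_group _ _) | exact: prodM_subT]).
- move=> g K; rewrite (astab1Rs (subwr2_group C)) => /setIP[_ Hg] /set2P[]->.
    exact: prodM_conj_subwr2 sCX sCY Hg.
  by rewrite setUC; apply: prodM_conj_subwr2 sCY sCX Hg.
- rewrite big_set2 //= setI_prodM (setIC Y) eXY prodMT_astab1_subwr2.
  by rewrite (setIidPr (prodM_subT _ _)).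
move=> K /set2P[]->; rewrite ?big_set2_neql ?big_set2_neqr //=;
  by rewrite (setIidPr (prodM_subT _ _)) mul_prodM ?mXY ?mYX.
Qed.

Lemma prodM_normal X Y : X <| T -> Y <| T -> prodM X Y <| M.
Proof.
move=> /andP[_ nXT] /andP[_ nYT]; rewrite /normal prodM_subT.
apply/subsetP => -[[c d] e]; rewrite mem_prodMT /= => /negbTE->.
rewrite inE prodMJ (normP (subsetP nXT c _)) ?(normP (subsetP nYT d _)) ?in_setT //.
Qed.

Lemma dprod_prodM1 X Y : prodM X 1 \x prodM 1 Y = prodM X Y.
Proof.
rewrite dprodE ?mul_prodM ?mulg1 ?mul1g //.
  apply/centsP => -[[a b] e] + [[c d] f].
  rewrite !mem_prodM !inE => /and3P[/negbTE-> /eqP-> _] /and3P[/negbTE-> _ /eqP->].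
  by rewrite /commute !wr2_mulE /= !mulg1 !mul1g.
by rewrite setI_prodM setIg1 setI1g; apply/trivgP/subsetP => -[[a b] e];
  rewrite mem_prodM !inE => /and3P[/negbTE-> /eqP-> /eqP->].
Qed.

Lemma M_normal_prodMT C : prodM C T != prodM T C ->
  M_normal 'Rs M (subwr2 C) [set prodM C T; prodM T C].
Proof.
move=> neqK; have neqK' := neqK; rewrite eq_sym in neqK'.
exists (fun K => if K == prodM C T then prodM_group T 1 else prodM_group 1 T).
split.
- by move=> K _; case: ifP => _; rewrite prodM_normal ?normal1 ?normal_refl.
- by rewrite big_set2 //= eqxx (negbTE neqK') dprod_prodM1.
move=> K /set2P[]->; rewrite ?big_set2_neql ?big_set2_neqr // eqxx ?(negbTE neqK');
  rewrite prodMT_astab1_subwr2 setI_prodM setTI setI1g ?dprod_prodM1 //.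
by rewrite dprodC dprod_prodM1.
Qed.

Lemma calF1_prodM X Y : X \proper T -> Y \proper T ->
  calF1 [set prodM X Y; prodM Y X] = [set gval X; gval Y].
Proof.
move=> pX pY; apply/setP => Z; apply/imsetP/set2P => [[K]|].
  by rewrite inE => /andP[/set2P[]-> _] ->; rewrite sigma1_prodM; [left | right].
case=> ->; [exists (prodM X Y) | exists (prodM Y X)];
  by rewrite ?sigma1_prodM // !inE eqxx ?orbT /= sigma1_prodM proper_neq.
Qed.

Lemma calF2_prodM X Y : X \proper T -> Y \proper T ->
  calF2 [set prodM X Y; prodM Y X] = [set gval Y; gval X].
Proof.
move=> pX pY; apply/setP => Z; apply/imsetP/set2P => [[K]|].
  by rewrite inE => /andP[/set2P[]-> _] ->; rewrite sigma2_prodM; [left | right].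
case=> ->; [exists (prodM X Y) | exists (prodM Y X)];
  by rewrite ?sigma2_prodM // !inE eqxx ?orbT /= sigma2_prodM proper_neq.
Qed.

Section SimpleNonabelian.
Hypotheses (simT : simple T) (nabT : ~~ abelian T).

Lemma prodMT_normal_fst (N : {group wr2 gT}) a b :
  M \subset 'N(N) -> inM a b \in N -> a != 1 -> forall t, inM t 1 \in N.
Proof.
move=> nNM Nab nta.
have nNT t : inM t 1 \in 'N(N) by rewrite (subsetP nNM) ?mem_prodMT.
pose N1 := [set x | inM x 1 \in N].
have gN1 : group_set N1.
  apply/group_setP; split=> [|x y]; rewrite !inE ?group1 // => N1x N1y.
  by rewrite -[1](mulg1 1) -inMM groupM.
have nN1 : Group gN1 <| [set: gT].
  rewrite /normal subsetT; apply/subsetP => t _; rewrite inE.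
  apply/subsetP => _ /imsetP[x N1x ->]; rewrite inE in N1x.
  by rewrite inE -[1](conj1g 1) -inMJ memJ_norm.
(* N1 is normal in T and contains the nontrivial commutator [a, t'], so N1 = T. *)
have [t' ntt'] := simple_nonabelian_commg simT nabT nta.
have N1_comm : [~ a, t'] \in N1.
  rewrite inE -[1](commg1 b) -inMR.
  by rewrite /commg groupM ?groupV ?memJ_norm.
have /simpleP[_ /(_ _ nN1) [/= N1_1|/= N1_T]] := simT.
  by move: N1_comm; rewrite N1_1 => /set1P/eqP; rewrite (negbTE ntt').
by move=> t; have := in_setT t; rewrite -N1_T inE.
Qed.

Lemma prodMT_normal_snd (N : {group wr2 gT}) a b :
  M \subset 'N(N) -> inM a b \in N -> b != 1 -> forall t, inM 1 t \in N.
Proof.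
move=> nNM Nab ntb t.
have nNsM : M \subset 'N(N :^ s) by rewrite normJ -(prodM_swapJ setT setT) conjSg.
have Nsba : inM b a \in (N :^ s)%G by rewrite /= -inM_swapJ memJ_conjg.
by rewrite -(memJ_conjg N s) inM_swapJ (prodMT_normal_fst nNsM Nsba).
Qed.

Lemma prodMT_normal_trivial (N : {group wr2 gT}) X Y :
  X \proper T -> Y \proper T -> N \subset prodM X Y -> M \subset 'N(N) -> N :=: 1.
Proof.
move=> pX pY sNXY nNM; apply/trivgP/subsetP => -[[a b] e] Nu; rewrite inE.
apply: contraT => ntu; have := subsetP sNXY _ Nu.
rewrite mem_prodM => /and3P[/negbTE e0 _ _]; rewrite e0 in Nu ntu.
have [a1|nta] := eqVneq a 1.
  have ntb : b != 1 by apply: contra ntu => /eqP b1; rewrite a1 b1.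
  case/eqP: (proper_neq pY); apply/setP => t; rewrite in_setT.
  have := subsetP sNXY _ (prodMT_normal_snd nNM Nu ntb t).
  by rewrite mem_prodM => /and3P[].
case/eqP: (proper_neq pX); apply/setP => t; rewrite in_setT.
have := subsetP sNXY _ (prodMT_normal_fst nNM Nu nta t).
by rewrite mem_prodM => /and3P[].
Qed.

Lemma minnormal_prodMT : minnormal M [set: wr2 gT].
Proof.
apply/mingroupP; split.
  rewrite normal_norm ?prodMT_normal // andbT; have /simpleP[ntT _] := simT.
  case/trivgPn: ntT => t _ ntt; apply/trivgPn; exists (inM t 1); first by rewrite mem_prodMT.
  by apply: contra ntt => /eqP[->].
move=> N /andP[ntN nNG] sNM; apply/eqP; rewrite eqEsubset sNM /=.
have nNM : M \subset 'N(N) := subset_trans (subsetT _) nNG.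
have nNs : s \in 'N(N) by rewrite (subsetP nNG) ?in_setT.
have [a [b [Nab nta]]] : exists a b, inM a b \in N /\ a != 1.
  case/trivgPn: ntN => -[[a b] e] Nu ntu.
  have := subsetP sNM _ Nu; rewrite mem_prodMT /= => /negbTE e0.
  rewrite e0 in Nu ntu; have [a1|] := eqVneq a 1; last by exists a, b.
  exists b, a; rewrite -inM_swapJ memJ_norm //; split=> //.
  by apply: contra ntu => /eqP b1; rewrite a1 b1.
have NT1 t : inM t 1 \in N := prodMT_normal_fst nNM Nab nta t.
apply/subsetP => -[[c d] e]; rewrite mem_prodMT /= => /negbTE->.
have -> : ((c, d), false) = inM c 1 * inM 1 d :> wr2 gT by rewrite inMM mulg1 mul1g.
by rewrite groupM // -inM_swapJ memJ_norm.
Qed.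

Lemma not_M_normal_prodM C X Y :
  X \proper T -> Y \proper T -> prodM X Y != prodM Y X ->
  ~ M_normal 'Rs M (subwr2 C) [set prodM X Y; prodM Y X].
Proof.
move=> pX pY neqK [Mi [nMi defM defK]].
have K1K : prodM X Y \in [set prodM X Y; prodM Y X] by rewrite !inE eqxx.
have K2K : prodM Y X \in [set prodM X Y; prodM Y X] by rewrite !inE eqxx orbT.
have sMi2 : Mi (prodM Y X) \subset prodM X Y.
  by have := defK _ K1K; rewrite big_set2_neql //= => /esym/dprodW <-; apply: mulG_subr.
have sMi1 : Mi (prodM X Y) \subset prodM Y X.
  by have := defK _ K2K; rewrite big_set2_neqr //= => /esym/dprodW <-; apply: mulG_subr.
have Mi1 := prodMT_normal_trivial pY pX sMi1 (normal_norm (nMi _ K1K)).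
have Mi2 := prodMT_normal_trivial pX pY sMi2 (normal_norm (nMi _ K2K)).
have /mingroupP[/andP[ntM _] _] := minnormal_prodMT.
move: defM; rewrite big_set2 //= Mi1 Mi2 dprodg1 => /esym M1.
exact: negP ntM (introT eqP M1).
Qed.

End SimpleNonabelian.

End Wreath2.

Theorem mainTheorem11 (gT : finGroupType) (A B : {group gT}) :
  simple [set: gT] -> ~~ abelian [set: gT] ->
  A \proper [set: gT] -> B \proper [set: gT] ->
  A * B = [set: gT] ->
  let M := prodM [set: gT] [set: gT] in
  let S2 := <[wr2_s gT]> in
  let G := [set: wr2 gT] in
  let K1 := prodM A B in
  let K2 := prodM B A in
  let H := (K1 :&: K2) * S2 in
  let Omega := rcosets H G in
  [/\ K1 :&: K2 = prodM (A :&: B) (A :&: B) /\ S2 \subset 'N(K1 :&: K2),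
      [transitive G, on Omega | 'Rs],
      minnormal M G /\ [transitive M, on Omega | 'Rs],
      (* (a) *)
      [/\ cartesian_system 'Rs G M H [set K1; K2],
          ~ M_normal 'Rs M H [set K1; K2],
          #|calF1 [set K1; K2]| = 2 & #|calF2 [set K1; K2]| = 2]
    & (* (b) *)
      cartesian_system 'Rs G M H
        [set prodM (A :&: B) [set: gT]; prodM [set: gT] (A :&: B)] /\
      M_normal 'Rs M H
        [set prodM (A :&: B) [set: gT]; prodM [set: gT] (A :&: B)]].
Proof.
move=> simT nabT pA pB eAB M S2 G K1 K2 H Omega.
pose C := (A :&: B)%G.
have eBA : B * A = [set: gT] by rewrite -invMG eAB invGid.
have neqAB : gval A != gval B.
  by apply: contraNneq (proper_neq pB) => eqAB; rewrite -eAB eqAB mulGid.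
have neqK : prodM A B != prodM B A by apply: contra neqAB => /eqP/prodM_inj[->].
have neqCT : prodM C [set: gT] != prodM [set: gT] C.
  apply: contraNneq (proper_neq pA) => /prodM_inj[eCT _].
  by rewrite eqEsubset subsetT -eCT subsetIl.
have eK12 : K1 :&: K2 = prodM C C by rewrite setI_prodM (setIC B).
have eH : H = subwr2 C by rewrite /H eK12 prodM_mul_cycle_swap.
have eOmega : Omega = rcosets H M.
  by rewrite /Omega /G eH -(mul_subwr2_prodMT C) rcosets_mulgl.
split.
- by split=> //; rewrite eK12 cycle_subG inE prodM_swapJ.
- by rewrite /Omega eH; apply: transRs_rcosets.
- split; first exact: minnormal_prodMT.
  by rewrite eOmega eH; apply: (transRs_rcosets _ (prodM_group _ _)).
- rewrite eH; split; first exact: cartesian_system_prodM.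
  + exact: not_M_normal_prodM.
  + by rewrite calF1_prodM // cards2 neqAB.
  + by rewrite calF2_prodM // cards2 eq_sym neqAB.
rewrite eH; split; last exact: M_normal_prodMT.
apply: (@cartesian_system_prodM _ C C [set: gT]%G) => //=; first exact: setIT.
  exact/mulGidPr/subsetT.
exact/mulGidPl/subsetT.
Qed.
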